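(* Consider the sensor-network Kalman filtering model of the context, with the network state process $\{\Xi(k)\}$ a time-homogeneous Markov chain with transition probabilities $p_{ij}$. Let $V_k=\operatorname{tr}P(k\mid k-1)$ and $Z(k)=(P(k\mid k-1),\Xi(k-1))$. Then $V_k\in\mathbb{R}_{\ge0}$ for all $k\in\mathbb{N}_0$, and there exists $W\in\mathbb{R}_{\ge0}$ such that for all $k\in\mathbb{N}_0$, $$\mathbf{E}\{V_{k+1}\mid Z(k)=(P,i)\}\le W+\nu_i\big(\|A(k)\|^2\operatorname{tr}P+\operatorname{tr}Q(k)\big),$$ where $\nu_i=\sum_{j\in\mathbb{B}}p_{ij}\Pr\{r(k)=0\mid\Xi(k)=j\}$.
   Context: System: $x(k+1)=A(k)x(k)+w(k)$, $k\in\mathbb{N}_0$, $x(k)\in\mathbb{R}^n$, $x(0)\sim\mathcal N(x_0,P_0)$, $w(k)\sim\mathcal N(0,Q(k))$ independent. Sensors $S_1,\dots,S_M$: $y_m(k)=C_mx(k)+v_m(k)$, $v_m(k)\sim\mathcal N(0,R_m(k))$ independent; $x(0),w,v_m$ mutually independent; $\{A(k)\},\{Q(k)\},\{R_m(k)\}$ deterministic and bounded. $\|\cdot\|$ is the spectral norm. Network: directed tree with root (gateway) $S_0$; each $S_m$ has one outgoing edge $\mathcal E_m=(S_m,\mathrm{parent}(S_m))$ and a unique path to $S_0$ with edge set $\mathrm{edge}(\mathrm{path}(S_m))$. Network state $\Xi(k)\in\mathbb{B}=\{1,\dots,|\mathbb{B}|\}$, defined for $k\ge-1$; channel gains $h_m(k)\ge0$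 with time-homogeneous conditional distributions given the network state and conditionally independent across links and times given the network states. Link successes $\gamma_m(k)\in\{0,1\}$ with $\Pr\{\gamma_m(k)=1\mid h_m(k)=h,u_m(k)=u,b_m(k)=b\}=f_m(hu,b)$, where (standing assumption) the power and bit-rate laws are $u_m(k)=\kappa_m(\Xi(k),h_1(k),\dots,h_M(k))$, $b_m(k)=\eta_m(\Xi(k),h_1(k),\dots,h_M(k))$. Conditioned on the network states, the $\gamma_m(k)$ are independent across $m$ and $k$ with $\Pr\{\gamma_m(k)=1\mid\Xi(k)=j\}$ independent of $k$; network and dropout processes are independent of $x(0),w,v_m$. Estimator: $\theta_m(k)=\prod_{\mathcal E_i\in\mathrm{edge}(\mathrm{path}(S_m))}\gamma_i(k)$, $C(k)=[\theta_1(k)C_1;\dots;\theta_M(k)C_M]$, $y(k)=[\theta_1(k)y_1(k);\dots;\theta_M(k)y_M(k)]$, $R(k)=\mathrm{diag}(R_1(k),\dots,R_M(k))$; Kalman filter $\hat x(k+1|k)=A(k)\hat x(k|k-1)+K(k)(y(k)-C(k)\hat x(k|k-1))$, $P(k+1|k)=A(k)P(k|k-1)A(k)^T+Q(k)-K(k)C(k)P(k|k-1)A(k)^T$, $K(k)=A(k)P(k|k-1)C(k)^T(C(k)P(k|k-1)C(k)^T+R(k))^{-1}$, $P(0|-1)=P_0$, $\hat x(0|-1)=x_0$. $r(k)=1$ if $C(k)$ has full column rank, $0$ otherwise. *)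

From HB Require Import structures.
From mathcomp Require Import all_boot all_order all_algebra.
From mathcomp Require Import boolp classical_sets reals.
Unset Printing Implicit Defensive.
Import Order.TTheory GRing.Theory Num.Theory.
Local Open Scope ring_scope.
Local Open Scope classical_set_scope.

Section KalmanDefs.
Context {R : realType}.

Definition enorm {n : nat} (x : 'cV[R]_n) : R := Num.sqrt (\sum_i x i 0 ^+ 2).

Definition specnorm {m n : nat} (A : 'M[R]_(m, n)) : R :=
  sup [set enorm (A *m x) | x in [set x : 'cV[R]_n | enorm x = 1]].

Definition psd {n : nat} (P : 'M[R]_n) : Prop :=
  P^T = P /\ forall x : 'cV[R]_n, 0 <= (x^T *m P *m x) 0 0.
Definition pd {n : nat} (P : 'M[R]_n) : Prop :=
  P^T = P /\ forall x : 'cV[R]_n, x != 0 -> 0 < (x^T *m P *m x) 0 0.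

(* Directed tree rooted at the gateway S_0: [par m = None] means that the
   outgoing edge E_m of S_m goes to S_0, [par m = Some i] that it goes to S_i. *)
Definition tree_step {M : nat} (par : 'I_M -> option 'I_M) (o : option 'I_M) :=
  obind par o.
(* every path reaches the gateway (so the graph is a tree rooted at S_0) *)
Definition rooted_tree {M : nat} (par : 'I_M -> option 'I_M) : Prop :=
  forall m : 'I_M, iter M (tree_step par) (Some m) = None.
(* the sensors i whose outgoing edge E_i lies on path(S_m) *)
Definition path_edges {M : nat} (par : 'I_M -> option 'I_M) (m : 'I_M) : {set 'I_M} :=
  [set i | [exists t : 'I_M.+1, iter t (tree_step par) (Some m) == Some i]].

Definition theta {M : nat} (par : 'I_M -> option 'I_M) (g : {ffun 'I_M -> bool})
  (m : 'I_M) : bool := [forall i in path_edges par m, g i].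

Definition Cstack {M n : nat} (p : 'I_M -> nat) (par : 'I_M -> option 'I_M)
  (C : forall m : 'I_M, 'M[R]_(p m, n)) (g : {ffun 'I_M -> bool})
  : 'M[R]_(\sum_m p m, n) :=
  \mxcol_m ((theta par g m)%:R *: C m).
Definition Rstack {M : nat} (p : 'I_M -> nat)
  (Rm : forall m : 'I_M, nat -> 'M[R]_(p m)) (k : nat) : 'M[R]_(\sum_m p m) :=
  \mxdiag_m Rm m k.

Definition rfull {N n : nat} (C : 'M[R]_(N, n)) : bool := \rank C == n.

Definition riccati {n N : nat} (A Q : 'M[R]_n) (C : 'M[R]_(N, n)) (Rk : 'M[R]_N)
  (P : 'M[R]_n) : 'M[R]_n :=
  let K := A *m P *m C^T *m invmx (C *m P *m C^T + Rk) in
  A *m P *m A^T + Q - K *m C *m P *m A^T.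

(* P(k|k-1) along a realization gs of the link-success vectors gamma(0), gamma(1), ... *)
Fixpoint Ppred {M n : nat} (p : 'I_M -> nat) (par : 'I_M -> option 'I_M)
  (A Q : nat -> 'M[R]_n) (C : forall m : 'I_M, 'M[R]_(p m, n))
  (Rm : forall m : 'I_M, nat -> 'M[R]_(p m)) (P0 : 'M[R]_n)
  (gs : nat -> {ffun 'I_M -> bool}) (k : nat) : 'M[R]_n :=
  match k with
  | 0 => P0
  | k'.+1 => riccati (A k') (Q k') (Cstack p par C (gs k')) (Rstack p Rm k')
               (@Ppred M n p par A Q C Rm P0 gs k')
  end.

(* conditional law of gamma(k) given Xi(k) = j:
   independent Bernoulli(q m j) across links *)
Definition gprob {M B : nat} (q : 'I_M -> 'I_B -> R) (j : 'I_B)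
  (g : {ffun 'I_M -> bool}) : R :=
  \prod_m (if g m then q m j else 1 - q m j).

Definition prob_r0 {M B n : nat} (p : 'I_M -> nat) (par : 'I_M -> option 'I_M)
  (C : forall m : 'I_M, 'M[R]_(p m, n)) (q : 'I_M -> 'I_B -> R) (j : 'I_B) : R :=
  \sum_(g : {ffun 'I_M -> bool} | ~~ rfull (Cstack p par C g)) gprob q j g.

Definition nu {M B n : nat} (p : 'I_M -> nat) (par : 'I_M -> option 'I_M)
  (C : forall m : 'I_M, 'M[R]_(p m, n)) (q : 'I_M -> 'I_B -> R)
  (pt : 'I_B -> 'I_B -> R) (i : 'I_B) : R :=
  \sum_j pt i j * prob_r0 p par C q j.

(* Finite sample space for the horizon k: the network states
   Xi(-1), ..., Xi(k) (index t of the first component is Xi(t-1))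
   and the link successes gamma(0), ..., gamma(k). *)
Definition Omega (M B k : nat) : finType :=
  ({ffun 'I_k.+2 -> 'I_B} * {ffun 'I_k.+1 -> {ffun 'I_M -> bool}})%type.

Definition XiS {M B k : nat} (w : Omega M B k) (t : nat) : 'I_B := w.1 (inord t).
Definition gamS {M B k : nat} (w : Omega M B k) (t : nat) : {ffun 'I_M -> bool} :=
  w.2 (inord t).

(* joint probability of an outcome: Markov chain with initial law pi0 for
   Xi(-1) and transition probabilities pt; gamma(t) conditionally independent
   given the network states, with law gprob q Xi(t). *)
Definition weight {M B k : nat} (pi0 : 'I_B -> R) (pt : 'I_B -> 'I_B -> R)
  (q : 'I_M -> 'I_B -> R) (w : Omega M B k) : R :=
  pi0 (XiS w 0) * \prod_(t < k.+1) pt (XiS w t) (XiS w t.+1)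
  * \prod_(t < k.+1) gprob q (XiS w t.+1) (gamS w t).

End KalmanDefs.

From HB Require Import structures.
From mathcomp Require Import all_boot all_order all_algebra.
From mathcomp Require Import classical_sets reals.
From mathcomp Require Import ring lra zify.
Import Order.TTheory GRing.Theory Num.Theory.
Local Open Scope ring_scope.

(* Completing the square in the gain shows that [P(k+1|k)] is the smallest of
   the covariances [(A - L C) P (A - L C)^T + L R L^T + Q] over all gains [L].
   If [C(k)] has full column rank, the gain [L = A C^+] removes the dependence
   on [P = P(k|k-1)], which leaves a bound [W] uniform over the finitely many
   link configurations; otherwise [L = 0] gives [|A|^2 tr P + tr Q].  Given
   the past, [r(k)] depends only on the transition [Xi(k-1) -> Xi(k)] and on
   [gamma(k)], so averaging this dichotomy over them yields the factor
   [nu_i = Pr{r(k) = 0 | Xi(k-1) = i}]. *)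

Section QuadraticForm.
Context {R : realType}.

Definition qform {n} (P : 'M[R]_n) (x y : 'cV[R]_n) : R := (x^T *m P *m y) 0 0.

Lemma qform_delta {n} (P : 'M[R]_n) a b :
  qform P (delta_mx a 0) (delta_mx b 0) = P a b.
Proof. by rewrite /qform trmx_delta -rowE -colE !mxE. Qed.

Lemma qformDl {n} (P : 'M[R]_n) x y z : qform P (x + y) z = qform P x z + qform P y z.
Proof. by rewrite /qform linearD /= !mulmxDl mxE. Qed.
Lemma qformDr {n} (P : 'M[R]_n) x y z : qform P z (x + y) = qform P z x + qform P z y.
Proof. by rewrite /qform !mulmxDr mxE. Qed.
Lemma qformZl {n} (P : 'M[R]_n) a x y : qform P (a *: x) y = a * qform P x y.
Proof. by rewrite /qform linearZ /= -!scalemxAl mxE. Qed.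
Lemma qformZr {n} (P : 'M[R]_n) a x y : qform P x (a *: y) = a * qform P x y.
Proof. by rewrite /qform -!scalemxAr mxE. Qed.

Lemma qform_addmx {n} (P Q : 'M[R]_n) x y : qform (P + Q) x y = qform P x y + qform Q x y.
Proof. by rewrite /qform mulmxDr mulmxDl mxE. Qed.
Lemma qform_oppmx {n} (P : 'M[R]_n) x y : qform (- P) x y = - qform P x y.
Proof. by rewrite /qform mulmxN mulNmx mxE. Qed.
Lemma qform_scalemx {n} (P : 'M[R]_n) a x y : qform (a *: P) x y = a * qform P x y.
Proof. by rewrite /qform -scalemxAr -scalemxAl mxE. Qed.

Lemma qformC {n} (P : 'M[R]_n) x y : P^T = P -> qform P x y = qform P y x.
Proof.
move=> sP; rewrite /qform -[in LHS](trmxK (x^T *m P *m y)) mxE.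
by rewrite !trmx_mul trmxK sP mulmxA.
Qed.

Lemma psd_diag_ge0 {n} (P : 'M[R]_n) i : psd P -> 0 <= P i i.
Proof. by case=> _ /(_ (delta_mx i 0)); rewrite -/(qform _ _ _) qform_delta. Qed.

Lemma psd_trace_ge0 {n} {P : 'M[R]_n} : psd P -> 0 <= \tr P.
Proof. by move=> hP; apply: sumr_ge0 => i _; apply: psd_diag_ge0. Qed.

Lemma psd_congruence {n m} (S : 'M[R]_n) (M : 'M[R]_(m, n)) :
  psd S -> psd (M *m S *m M^T).
Proof.
case=> sS qS; split; first by rewrite !trmx_mul trmxK sS mulmxA.
by move=> x; have := qS (M^T *m x); rewrite trmx_mul trmxK !mulmxA.
Qed.

Lemma psdD {n} {P Q : 'M[R]_n} : psd P -> psd Q -> psd (P + Q).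
Proof.
case=> sP qP [sQ qQ]; split; first by rewrite linearD /= sP sQ.
by move=> x; rewrite mulmxDr mulmxDl mxE addr_ge0.
Qed.

Lemma pd_psd {n} {P : 'M[R]_n} : pd P -> psd P.
Proof.
case=> sP qP; split => // x; have [->|x0] := eqVneq x 0; first by rewrite mulmx0 mxE.
exact/ltW/qP.
Qed.

Lemma psd_pdD {n} {P Q : 'M[R]_n} : psd P -> pd Q -> pd (P + Q).
Proof.
case=> sP qP [sQ qQ]; split; first by rewrite linearD /= sP sQ.
by move=> x x0; rewrite mulmxDr mulmxDl mxE ltr_wpDl ?qP ?qQ.
Qed.

Lemma pd_unitmx {n} {S : 'M[R]_n} : pd S -> S \in unitmx.
Proof.
case=> sS qS; rewrite -row_free_unit; apply: contraT => nf.
have : kermx S != 0.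
  by rewrite -mxrank_eq0 mxrank_ker subn_eq0 -ltnNge ltn_neqAle nf rank_leq_row.
case/matrix0Pn => i [j hij].
have hv : (row i (kermx S))^T != 0.
  by rewrite trmx_eq0; apply/rV0Pn; exists j; rewrite (@mxE _ 1 n).
have := qS _ hv; rewrite trmxK -row_mul mulmx_ker.
by rewrite linear0 mul0mx mxE ltxx.
Qed.

Lemma psd_row0 {n} (P : 'M[R]_n) r j : psd P -> P r r = 0 -> P r j = 0.
Proof.
move=> hP Prr; have [sP qP] := hP; apply/eqP; apply: contraT => hb.
set b := P r j; set d := P j j.
have hd : 0 <= d by apply: psd_diag_ge0.
have hjr : P j r = b by rewrite /b -[in LHS]sP mxE.
(* evaluate the form at [s e_r + e_j] with [2 s b = - (d + 1)] *)
set s := - (d + 1) / (2 * b).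
have hs : s * b = - (d + 1) / 2 by rewrite /s; field; rewrite hb.
have := qP (s *: delta_mx r 0 + delta_mx j 0); rewrite -/(qform _ _ _).
rewrite !(qformDl, qformDr, qformZl, qformZr) !qform_delta Prr hjr -/b -/d.
lra.
Qed.

Lemma psd_schur_complement {n} (P : 'M[R]_n) r : psd P -> 0 < P r r ->
  psd (P - (P r r)^-1 *: (col r P *m (col r P)^T)).
Proof.
move=> [sP qP] a_gt0; set a := P r r in a_gt0 *; set v := col r P.
split; first by rewrite linearB /= linearZ /= trmx_mul trmxK sP.
move=> x; rewrite -/(qform _ _ _) qform_addmx qform_oppmx qform_scalemx.
set e := delta_mx r 0 : 'cV[R]_n.
have -> : qform (v *m v^T) x x = qform P e x ^+ 2.
  rewrite /qform mulmxA -[x^T *m v *m v^T *m x]mulmxA mxE big_ord1 expr2.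
  have -> : x^T *m v = e^T *m P *m x.
    rewrite -[LHS]trmxK [(_ *m _)^T]mx11_scalar tr_scalar_mx -mx11_scalar.
    by rewrite /v colE !trmx_mul trmxK sP.
  by rewrite /v colE trmx_mul sP -/e.
set be := qform P e x.
(* evaluate the form of [P] at [x + t e] with [t a = - be] *)
set t := - be / a; have hta : t * a = - be by rewrite /t; field; rewrite gt_eqF.
have := qP (x + t *: e); rewrite -/(qform _ _ _).
rewrite !(qformDl, qformDr, qformZl, qformZr) (qformC _ x e sP) /e qform_delta -/a -/be.
have -> : a^-1 * be ^+ 2 = - (t * be) by rewrite /t; field; rewrite gt_eqF.
nra.
Qed.

(* Symmetric Gaussian elimination, one column at a time: the Schur complement
   with respect to the pivot [r] clears row and column [r]. *)
Lemma psd_factor_rec {n} k : (k <= n)%N -> forall P : 'M[R]_n, psd P ->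
  (forall i j : 'I_n, (i < n - k)%N -> P i j = 0) ->
  exists m (G : 'M[R]_(n, m)), P = G *m G^T.
Proof.
elim: k => [|k IH] hk P hP hz.
  exists 0%N, 0; apply/matrixP => i j; rewrite mul0mx mxE hz //.
  by rewrite subn0 ltn_ord.
have hr : (n - k.+1 < n)%N by lia.
set r := Ordinal hr.
have hzr (i : 'I_n) : (i < n - k)%N -> (i < n - k.+1)%N \/ i = r.
  by move=> hi; have [|hi'] := ltnP i (n - k.+1); [left | right; apply: val_inj => /=; lia].
have [a0|an0] := eqVneq (P r r) 0.
  apply: IH => // [|i j /(hzr i) [/hz //|->]]; [lia | exact: psd_row0].
have apos : 0 < P r r by rewrite lt0r an0 psd_diag_ge0.
set a := P r r in an0 apos; set v := col r P.
have [m [G' hG']] : exists m (G : 'M[R]_(n, m)), P - a^-1 *: (v *m v^T) = G *m G^T.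
  apply: (IH _ _ (psd_schur_complement _ _ hP apos)) => [|i j /(hzr i) [hi|->]]; first by lia.
    by rewrite !mxE big_ord1 !mxE (hz i j hi) (hz i r hi) mul0r mulr0 subr0.
  have hjr : P j r = P r j by rewrite -[in LHS](proj1 hP) mxE.
  by rewrite !mxE big_ord1 !mxE -/a mulrA mulVf // mul1r hjr subrr.
exists (m + 1)%N, (row_mx G' ((Num.sqrt a)^-1 *: v)).
rewrite tr_row_mx mul_row_col -hG' linearZ /=.
rewrite linearZ /= -scalemxAl -scalemxAr scalerA -invfM -expr2 sqr_sqrtr ?ltW //.
by rewrite scalerN addrNK.
Qed.

Lemma psd_factor {n} (P : 'M[R]_n) : psd P -> exists m (G : 'M[R]_(n, m)), P = G *m G^T.
Proof. by move=> hP; apply: (@psd_factor_rec n n) => // i j; rewrite subnn. Qed.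

End QuadraticForm.

Section SpectralNorm.
Context {R : realType}.
Local Open Scope classical_set_scope.

Definition sqnorm {n} (x : 'cV[R]_n) : R := \sum_i x i 0 ^+ 2.

Lemma sqnorm_ge0 {n} (x : 'cV[R]_n) : 0 <= sqnorm x.
Proof. by apply: sumr_ge0 => i _; apply: sqr_ge0. Qed.

Lemma sqnormZ {n} (x : 'cV[R]_n) c : sqnorm (c *: x) = c ^+ 2 * sqnorm x.
Proof. by rewrite /sqnorm mulr_sumr; apply: eq_bigr => i _; rewrite mxE exprMn. Qed.

Lemma sqr_le_sqnorm {n} (x : 'cV[R]_n) i : x i 0 ^+ 2 <= sqnorm x.
Proof. by rewrite /sqnorm (bigD1 i) //= lerDl; apply: sumr_ge0 => j _; apply: sqr_ge0. Qed.

Lemma sqnorm_eq0 {n} (x : 'cV[R]_n) : (sqnorm x == 0) = (x == 0).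
Proof.
apply/eqP/eqP => [x0|->]; last by rewrite /sqnorm big1 // => i _; rewrite mxE expr0n.
apply/matrixP => i j; rewrite ord1 mxE; apply/eqP; rewrite -sqrf_eq0 eq_le sqr_ge0 andbT.
by rewrite -x0 sqr_le_sqnorm.
Qed.

Lemma sqnorm_gt0 {n} {x : 'cV[R]_n} : x != 0 -> 0 < sqnorm x.
Proof. by rewrite -sqnorm_eq0 lt0r sqnorm_ge0 andbT. Qed.

Lemma specnorm_has_sup {m n} (A : 'M[R]_(m, n)) (u : 'cV[R]_n) : enorm u = 1 ->
  has_sup [set enorm (A *m x) | x in [set x : 'cV[R]_n | enorm x = 1]].
Proof.
move=> hu; split; first by exists (enorm (A *m u)), u.
exists (Num.sqrt (\sum_i (\sum_j `|A i j|) ^+ 2)) => _ [y hy <-].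
have ny : sqnorm y = 1 by rewrite -[sqnorm y]sqr_sqrtr ?sqnorm_ge0 // -/(enorm y) hy expr1n.
rewrite ler_sqrt; last by apply: sumr_ge0 => i _; apply: sqr_ge0.
apply: ler_sum => i _; rewrite mxE.
have hyj j : `|y j 0| <= 1.
  have := sqr_le_sqnorm y j; rewrite ny -real_normK ?num_real // => h.
  have := normr_ge0 (y j 0); nra.
rewrite -real_normK ?num_real // ler_pXn2r ?nnegrE //; last by apply: sumr_ge0.
apply: le_trans (ler_norm_sum _ _ _) _; apply: ler_sum => j _.
by rewrite normrM ler_piMr.
Qed.

Lemma enorm_le_specnorm {m n} (A : 'M[R]_(m, n)) u :
  enorm u = 1 -> enorm (A *m u) <= specnorm A.
Proof. by move=> hu; apply: (sup_upper_bound (specnorm_has_sup A _ hu)); exists u. Qed.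

Lemma specnorm_ge0 {m n} (A : 'M[R]_(m, n)) : (0 < n)%N -> 0 <= specnorm A.
Proof.
move=> n0; set e := delta_mx (Ordinal n0) 0 : 'cV[R]_n.
have he : enorm e = 1.
  rewrite /enorm (bigD1 (Ordinal n0)) //= big1 => [|i /negbTE ni]; last by rewrite mxE ni expr0n.
  by rewrite mxE !eqxx expr1n addr0 sqrtr1.
exact: le_trans (sqrtr_ge0 _) (enorm_le_specnorm A e he).
Qed.

Lemma sqnorm_mulmx_le {m n} (A : 'M[R]_(m, n)) x :
  sqnorm (A *m x) <= specnorm A ^+ 2 * sqnorm x.
Proof.
have [->|x0] := eqVneq x 0.
  by rewrite mulmx0 /sqnorm !big1 ?mulr0 // => i _; rewrite mxE expr0n.
have a0 := sqnorm_gt0 x0; set a := sqnorm x in a0 *.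
set u := (Num.sqrt a)^-1 *: x.
have hu : enorm u = 1.
  by rewrite /enorm -/(sqnorm u) sqnormZ exprVn (sqr_sqrtr (ltW a0)) mulVf ?gt_eqF // sqrtr1.
have := enorm_le_specnorm A u hu.
rewrite /enorm -/(sqnorm _) -scalemxAr sqnormZ exprVn (sqr_sqrtr (ltW a0)) => h.
have s0 : 0 <= specnorm A by apply: le_trans h; apply: sqrtr_ge0.
rewrite mulrC -ler_pdivrMl //.
rewrite -[X in X <= _]sqr_sqrtr; last by rewrite mulr_ge0 ?invr_ge0 ?sqnorm_ge0 ?ltW.
by rewrite ler_pXn2r ?nnegrE ?sqrtr_ge0.
Qed.

End SpectralNorm.

Section TraceBounds.
Context {R : realType}.

Lemma mxtrace_mulmx_tr_rows {n m} (L : 'M[R]_(n, m)) :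
  \tr (L *m L^T) = \sum_i sqnorm (row i L)^T.
Proof.
apply: eq_bigr => i _; rewrite mxE; apply: eq_bigr => j _.
by rewrite !mxE expr2.
Qed.

Lemma mxtrace_mulmx_tr_cols {n m} (L : 'M[R]_(n, m)) :
  \tr (L *m L^T) = \sum_j sqnorm (col j L).
Proof.
rewrite mxtrace_mulmx_tr_rows exchange_big; apply: eq_bigr => j _; apply: eq_bigr => i _.
by rewrite !mxE.
Qed.

Lemma mxtrace_mulmx_tr_ge0 {n m} (L : 'M[R]_(n, m)) : 0 <= \tr (L *m L^T).
Proof. by rewrite mxtrace_mulmx_tr_rows; apply: sumr_ge0 => i _; apply: sqnorm_ge0. Qed.

Lemma mxtrace_mulmx_le {n m p} (A : 'M[R]_(n, m)) (G : 'M[R]_(m, p)) c :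
  specnorm A <= c -> \tr (A *m G *m (A *m G)^T) <= c ^+ 2 * \tr (G *m G^T).
Proof.
move=> hc; have [m0|m_gt0] := posnP m.
  have -> : G = 0 by apply/matrixP => i; have := ltn_ord i; rewrite {2}m0.
  by rewrite !(mulmx0, mul0mx, trmx0, mxtrace0, mulr0).
have hc2 : specnorm A ^+ 2 <= c ^+ 2.
  by rewrite ler_pXn2r ?nnegrE ?specnorm_ge0 //; apply: le_trans hc; apply: specnorm_ge0.
rewrite !mxtrace_mulmx_tr_cols mulr_sumr; apply: ler_sum => j _.
rewrite !colE -mulmxA -colE; apply: le_trans (sqnorm_mulmx_le A _) _.
by rewrite ler_wpM2r ?sqnorm_ge0.
Qed.

Lemma mxtrace_congruence_le {n m} (A : 'M[R]_(n, m)) (P : 'M[R]_m) :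
  psd P -> \tr (A *m P *m A^T) <= specnorm A ^+ 2 * \tr P.
Proof.
case/psd_factor=> k [G ->].
by rewrite !mulmxA -mulmxA -trmx_mul; apply: mxtrace_mulmx_le.
Qed.

Lemma qform_le_sqnorm {n} (B : 'M[R]_n) c x :
  specnorm B <= c -> qform B x x <= (`|c| + 1) * sqnorm x.
Proof.
move=> hc; have [->|x0] := eqVneq x 0.
  by rewrite /qform mulmx0 mxE /sqnorm big1 ?mulr0 // => i _; rewrite mxE expr0n.
set t := `|c| + 1; have t_gt0 : 0 < t by rewrite ltr_wpDl.
have s0 : 0 <= specnorm B.
  by apply: specnorm_ge0; case: n B x hc x0 {t t_gt0} => // B x _; rewrite flatmx0 eqxx.
(* AM-GM coordinatewise, with a positive weight [t] dominating the spectral norm *)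
have amgm : 2 * t * qform B x x <= t ^+ 2 * sqnorm x + sqnorm (B *m x).
  rewrite /qform -mulmxA mxE /sqnorm !mulr_sumr -big_split /=; apply: ler_sum => i _.
  by rewrite mxE; have := sqr_ge0 (t * x i 0 - (B *m x) i 0); nra.
have hBx : sqnorm (B *m x) <= t ^+ 2 * sqnorm x.
  apply: le_trans (sqnorm_mulmx_le B x) _; rewrite ler_wpM2r ?sqnorm_ge0 //.
  rewrite ler_pXn2r ?nnegrE ?(ltW t_gt0) //.
  by apply: (le_trans hc); rewrite /t ler_wpDr ?ler_norm.
have := sqnorm_ge0 x; nra.
Qed.

Lemma mxtrace_qform_le {N n} (D : 'M[R]_N) (L : 'M[R]_(n, N)) k :
  (forall x, qform D x x <= k * sqnorm x) ->
  \tr (L *m D *m L^T) <= k * \tr (L *m L^T).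
Proof.
move=> hD; rewrite mxtrace_mulmx_tr_rows mulr_sumr; apply: ler_sum => i _.
have -> : (L *m D *m L^T) i i = qform D (row i L)^T (row i L)^T.
  by rewrite /qform trmxK -row_mul tr_row colE mulmxA -colE -row_mul !mxE.
exact: hD.
Qed.

Lemma mxtrace_le_specnorm {n} (Q : 'M[R]_n) c :
  specnorm Q <= c -> \tr Q <= (`|c| + 1) * n%:R.
Proof.
move=> hc; have := mxtrace_qform_le Q 1%:M _ (fun x => qform_le_sqnorm Q c x hc).
by rewrite mul1mx trmx1 !mulmx1 mxtrace1.
Qed.

End TraceBounds.

Section BlockDiagonal.
Context {R : realType} {M : nat} (p : 'I_M -> nat).

Lemma qform_mxdiag (B_ : forall m, 'M[R]_(p m)) (x : 'cV[R]_(\sum_m p m)) :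
  qform (\mxdiag_m B_ m) x x = \sum_m qform (B_ m) (submxcol x m) (submxcol x m).
Proof.
rewrite /qform -[in LHS](submxcolK x) tr_mxcol /mxdiag mul_mxrow_mxblock.
rewrite mul_mxrow_mxcol summxE; apply: eq_bigr => j _; congr (_ 0 0); congr (_ *m _).
rewrite (bigD1 j) //= eqxx conform_mx_id big1 ?addr0 // => i /negbTE ->.
by rewrite mulmx0.
Qed.

Lemma sqnorm_submxcol (x : 'cV[R]_(\sum_m p m)) :
  sqnorm x = \sum_m sqnorm (submxcol x m).
Proof.
have sqnormE n (y : 'cV[R]_n) : sqnorm y = (y^T *m y) 0 0.
  by rewrite mxE; apply: eq_bigr => i _; rewrite mxE expr2.
rewrite sqnormE -[in LHS](submxcolK x) tr_mxcol mul_mxrow_mxcol summxE.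
by apply: eq_bigr => i _; rewrite sqnormE.
Qed.

Lemma pd_mxdiag (B_ : forall m, 'M[R]_(p m)) :
  (forall m, pd (B_ m)) -> pd (\mxdiag_m B_ m).
Proof.
move=> hB; split; first by rewrite tr_mxdiag; apply: eq_mxdiag => m; case: (hB m).
move=> x x0; rewrite -/(qform _ _ _) qform_mxdiag.
have [m hm] : exists m, submxcol x m != 0.
  apply/existsP; apply: contraNT x0; rewrite negb_exists => /forallP x_0.
  by rewrite -(submxcolK x) (eq_mxcol (fun i => eqP (negbNE (x_0 i)))) mxcol0.
rewrite (bigD1 m) //= ltr_wpDr ?(proj2 (hB m)) //.
by apply: sumr_ge0 => i _; case: (pd_psd (hB i)) => _; apply.
Qed.

Lemma qform_mxdiag_le (B_ : forall m, 'M[R]_(p m)) c x :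
  (forall m, specnorm (B_ m) <= c) ->
  qform (\mxdiag_m B_ m) x x <= (`|c| + 1) * sqnorm x.
Proof.
move=> hc; rewrite qform_mxdiag sqnorm_submxcol mulr_sumr.
by apply: ler_sum => m _; apply: qform_le_sqnorm.
Qed.

End BlockDiagonal.

Section Riccati.
Context {R : realType} {n N : nat}.
Variables (A Q P : 'M[R]_n) (C : 'M[R]_(N, n)) (D : 'M[R]_N).

(* Completing the square in the gain: [riccati] is the minimum over [L] of the
   covariance [(A - L C) P (A - L C)^T + L D L^T + Q] of the estimator with gain [L]. *)
Lemma riccati_completion (L : 'M[R]_(n, N)) :
  P^T = P -> D^T = D -> C *m P *m C^T + D \in unitmx ->
  let S := C *m P *m C^T + D in
  let K := A *m P *m C^T *m invmx S in
  riccati A Q C D P + (L - K) *m S *m (L - K)^T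
  = (A - L *m C) *m P *m (A - L *m C)^T + L *m D *m L^T + Q.
Proof.
move=> sP sD uS S K; rewrite /riccati -/S -/K.
have sS : S^T = S by rewrite /S linearD /= !trmx_mul trmxK sP sD mulmxA.
have KS : K *m S = A *m P *m C^T by rewrite /K -mulmxA mulVmx // mulmx1.
have SKt : S *m K^T = C *m P *m A^T.
  by rewrite -sS -trmx_mul KS !trmx_mul trmxK sP mulmxA.
have KSKt : K *m S *m K^T = K *m C *m P *m A^T by rewrite -mulmxA SKt !mulmxA.
rewrite linearB /= !mulmxBl !mulmxBr KSKt KS -(mulmxA L S K^T) SKt.
rewrite /S mulmxDr mulmxDl [(A - L *m C)^T]linearB /= trmx_mul !mulmxBr !mulmxA.
move: (A *m P *m A^T) (K *m C *m P *m A^T) (L *m C *m P *m C^T *m L^T)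
  (L *m D *m L^T) (L *m C *m P *m A^T) (A *m P *m C^T *m L^T) Q => ? ? ? ? ? ? ?.
by apply/matrixP => i j; rewrite !mxE; ring.
Qed.

Hypotheses (psdP : psd P) (pdD : pd D).

Let pdS : pd (C *m P *m C^T + D).
Proof. exact/psd_pdD/pdD/psd_congruence. Qed.

Let completion L := riccati_completion L (proj1 psdP) (proj1 pdD) (pd_unitmx pdS).

Lemma psd_riccati : psd Q -> psd (riccati A Q C D P).
Proof.
move=> psdQ; have := completion (A *m P *m C^T *m invmx (C *m P *m C^T + D)).
rewrite /= subrr mul0mx mul0mx addr0 => ->.
by apply/psdD/psdQ/psdD; apply: psd_congruence => //; apply: pd_psd.
Qed.

Lemma mxtrace_riccati_le (L : 'M[R]_(n, N)) :
  \tr (riccati A Q C D P)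
  <= \tr ((A - L *m C) *m P *m (A - L *m C)^T) + \tr (L *m D *m L^T) + \tr Q.
Proof.
rewrite -!mxtraceD -(completion L) [in X in _ <= X]mxtraceD lerDl.
exact/psd_trace_ge0/psd_congruence/pd_psd.
Qed.

Lemma mxtrace_riccati_le_open :
  \tr (riccati A Q C D P) <= specnorm A ^+ 2 * \tr P + \tr Q.
Proof.
apply: le_trans (mxtrace_riccati_le 0) _.
rewrite mul0mx subr0 !mul0mx mxtrace0 addr0 lerD2r.
exact: mxtrace_congruence_le.
Qed.

Lemma mxtrace_riccati_le_full : rfull C ->
  \tr (riccati A Q C D P)
  <= \tr (A *m pinvmx C *m D *m (A *m pinvmx C)^T) + \tr Q.
Proof.
move=> fullC; have : (1%:M <= C)%MS by rewrite sub1mx.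
move/mulmxKpV; rewrite mul1mx => CpC.
apply: le_trans (mxtrace_riccati_le (A *m pinvmx C)) _.
by rewrite -[A *m _ *m C]mulmxA CpC mulmx1 subrr !mul0mx mxtrace0 add0r.
Qed.

End Riccati.

Section RiccatiTraceBound.
Context {R : realType} {n N : nat}.

Lemma mxtrace_riccati_le_rank (A Q P : 'M[R]_n) (C : 'M[R]_(N, n)) (D : 'M[R]_N) c :
  psd P -> pd D -> specnorm A <= c -> specnorm Q <= c ->
  (forall x, qform D x x <= (`|c| + 1) * sqnorm x) ->
  \tr (riccati A Q C D P)
  <= (`|c| + 1) * (n%:R + c ^+ 2 * \tr (pinvmx C *m (pinvmx C)^T))
     + (~~ rfull C)%:R * (specnorm A ^+ 2 * \tr P + \tr Q).
Proof.
move=> psdP pdD hA hQ hD; have t_ge0 : 0 <= `|c| + 1 by rewrite addr_ge0.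
case: (boolP (rfull C)) => fullC /=; rewrite ?mul0r ?mul1r ?addr0.
  apply: le_trans (mxtrace_riccati_le_full _ _ _ _ _ psdP pdD fullC) _.
  rewrite mulrDr addrC lerD ?mxtrace_le_specnorm //.
  apply: le_trans (mxtrace_qform_le _ _ _ hD) _.
  by rewrite ler_wpM2l ?mxtrace_mulmx_le.
apply: le_trans (mxtrace_riccati_le_open _ _ _ _ _ psdP pdD) _.
rewrite lerDr; apply: mulr_ge0 t_ge0 (addr_ge0 (ler0n _ _) (mulr_ge0 (sqr_ge0 _) _)).
exact: mxtrace_mulmx_tr_ge0.
Qed.

End RiccatiTraceBound.

Section KalmanFilter.
Context {R : realType} {n M : nat} (p : 'I_M -> nat) (par : 'I_M -> option 'I_M).
Variables (A Q : nat -> 'M[R]_n) (C : forall m : 'I_M, 'M[R]_(p m, n))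
  (Rm : forall m : 'I_M, nat -> 'M[R]_(p m)) (P0 : 'M[R]_n).
Local Notation Ppred := (Ppred p par A Q C Rm P0).

Lemma eq_Ppred (gs gs' : nat -> {ffun 'I_M -> bool}) k :
  (forall t, (t < k)%N -> gs t = gs' t) -> Ppred gs k = Ppred gs' k.
Proof. by elim: k => [|k IH] //= eq_gs; rewrite eq_gs // IH // => t /ltnW /eq_gs. Qed.

(* The constant [W]: when [C(k)] has full column rank, the gain [A(k) C(k)^+]
   bounds [\tr P(k+1|k)] by a term of this sum, whatever [P(k|k-1)] is. *)
Definition riccati_offset (c : R) : R :=
  let Cinv g := pinvmx (Cstack p par C g) in
  (`|c| + 1) * (n%:R + c ^+ 2 * \sum_g \tr (Cinv g *m (Cinv g)^T)).

Lemma riccati_offset_ge0 c : 0 <= riccati_offset c.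
Proof.
apply: mulr_ge0 (addr_ge0 _ _) (addr_ge0 (ler0n _ _) (mulr_ge0 (sqr_ge0 _) _)) => //.
by apply: sumr_ge0 => g _; apply: mxtrace_mulmx_tr_ge0.
Qed.

Hypotheses (psdP0 : psd P0) (psdQ : forall k, psd (Q k)) (pdRm : forall m k, pd (Rm m k)).

Lemma psd_Ppred gs k : psd (Ppred gs k).
Proof. by elim: k => //= k IH; apply/psd_riccati/psdQ/pd_mxdiag. Qed.

Lemma mxtrace_Ppred_succ_le c gs k :
  specnorm (A k) <= c -> specnorm (Q k) <= c -> (forall m, specnorm (Rm m k) <= c) ->
  \tr (Ppred gs k.+1)
  <= riccati_offset c + (~~ rfull (Cstack p par C (gs k)))%:R
                        * (specnorm (A k) ^+ 2 * \tr (Ppred gs k) + \tr (Q k)).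
Proof.
move=> hA hQ hR /=; have pdR := pd_mxdiag _ _ (pdRm^~ k).
apply: le_trans (mxtrace_riccati_le_rank _ _ _ _ _ _ (psd_Ppred _ _) pdR hA hQ _) _.
  by move=> x; apply: qform_mxdiag_le.
rewrite lerD2r ler_wpM2l ?addr_ge0 // lerD2l ler_wpM2l ?sqr_ge0 //.
by rewrite (bigD1 (gs k)) //= lerDl sumr_ge0 // => g _; apply: mxtrace_mulmx_tr_ge0.
Qed.

End KalmanFilter.

Section LinkDistribution.
Context {R : realType} {M B : nat} (q : 'I_M -> 'I_B -> R).
Hypothesis q01 : forall m j, 0 <= q m j <= 1.

Lemma gprob_ge0 j g : 0 <= gprob q j g.
Proof.
apply: prodr_ge0 => m _; have /andP[q0 q1] := q01 m j.
by case: (g m); rewrite ?subr_ge0.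
Qed.

Lemma gprob_sum1 j : \sum_g gprob q j g = 1.
Proof.
rewrite /gprob -(bigA_distr_bigA (fun m (b : bool) => if b then q m j else 1 - q m j)).
by rewrite big1 // => m _; rewrite big_bool /= addrC subrK.
Qed.

Lemma weight_ge0 {k} (pi0 : 'I_B -> R) pt (w : Omega M B k) :
  (forall i j, 0 <= pt i j) -> (forall i, 0 <= pi0 i) -> 0 <= weight pi0 pt q w.
Proof.
move=> pt0 pi00; rewrite /weight !mulr_ge0 //; apply: prodr_ge0 => t _ //.
exact: gprob_ge0.
Qed.

End LinkDistribution.

Lemma sum_reindex_key {V : nmodType} {U X : finType} (upd : U -> X -> U) (key : U -> X)
    x0 (F : U -> V) :
  (forall u x, key (upd u x) = x) -> (forall u x y, upd (upd u x) y = upd u y) ->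
  (forall u, upd u (key u) = u) ->
  \sum_u F u = \sum_(v | key v == x0) \sum_x F (upd v x).
Proof.
move=> key_upd upd_upd upd_key; rewrite pair_big_dep /=.
rewrite [RHS](reindex (fun u => (upd u x0, key u))) /=.
  by apply: eq_big => [u|u _]; rewrite ?key_upd ?eqxx // upd_upd upd_key.
exists (fun vx => upd vx.1 vx.2) => [u _|[v x]]; first by rewrite upd_upd upd_key.
by rewrite inE /= andbT => /eqP v_x0; rewrite key_upd upd_upd -v_x0 upd_key.
Qed.

Section LastStep.
Context {R : realType} (M B k : nat).
Local Notation Om := (Omega M B k).
Local Notation G := {ffun 'I_M -> bool}.

(* overwrite the last network state Xi(k) (stored at index [k.+1]) and the last
   link vector gamma(k) *)
Definition set_last (w : Om) (x : 'I_B * G) : Om :=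
  ([ffun t => if t == ord_max then x.1 else w.1 t],
   [ffun t => if t == ord_max then x.2 else w.2 t]).
Definition last_step (w : Om) : 'I_B * G := (w.1 ord_max, w.2 ord_max).

Lemma last_step_set w x : last_step (set_last w x) = x.
Proof. by case: x => a b; rewrite /last_step /set_last /= !ffunE !eqxx. Qed.

Lemma set_last_set w x y : set_last (set_last w x) y = set_last w y.
Proof. by congr (_, _); apply/ffunP => t; rewrite !ffunE; case: eqP. Qed.

Lemma set_last_step w : set_last w (last_step w) = w.
Proof. by case: w => a b; congr (_, _); apply/ffunP => t; rewrite !ffunE; case: eqP => // ->. Qed.

Lemma XiS_set_last w x t : (t <= k)%N -> XiS (set_last w x) t = XiS w t.
Proof.
move=> tk; rewrite /XiS ffunE; case: eqP => // /(congr1 val).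
by rewrite /= inordK; lia.
Qed.

Lemma XiS_set_last_end w x : XiS (set_last w x) k.+1 = x.1.
Proof.
by rewrite /XiS ffunE (_ : inord k.+1 = ord_max) ?eqxx //; apply: val_inj; rewrite /= inordK.
Qed.

Lemma gamS_set_last w x t : (t < k)%N -> gamS (set_last w x) t = gamS w t.
Proof.
move=> tk; rewrite /gamS ffunE; case: eqP => // /(congr1 val).
by rewrite /= inordK; lia.
Qed.

Lemma gamS_set_last_end w x : gamS (set_last w x) k = x.2.
Proof.
by rewrite /gamS ffunE (_ : inord k = ord_max) ?eqxx //; apply: val_inj; rewrite /= inordK.
Qed.

Variables (pi0 : 'I_B -> R) (pt : 'I_B -> 'I_B -> R) (q : 'I_M -> 'I_B -> R).

Definition prefix_weight (w : Om) : R :=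
  pi0 (XiS w 0) * \prod_(t < k) pt (XiS w t) (XiS w t.+1)
  * \prod_(t < k) gprob q (XiS w t.+1) (gamS w t).

Lemma weight_set_last w x :
  weight pi0 pt q (set_last w x)
  = prefix_weight w * pt (XiS w k) x.1 * gprob q x.1 x.2.
Proof.
rewrite /weight /prefix_weight !big_ord_recr /= XiS_set_last_end gamS_set_last_end.
rewrite !(XiS_set_last _ _ 0) ?(XiS_set_last _ _ k) //.
have -> : \prod_(t < k) pt (XiS (set_last w x) t) (XiS (set_last w x) t.+1)
          = \prod_(t < k) pt (XiS w t) (XiS w t.+1).
  by apply: eq_bigr => t _; have tk := ltn_ord t; rewrite !XiS_set_last // ltnW.
have -> : \prod_(t < k) gprob q (XiS (set_last w x) t.+1) (gamS (set_last w x) t)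
          = \prod_(t < k) gprob q (XiS w t.+1) (gamS w t).
  by apply: eq_bigr => t _; have tk := ltn_ord t; rewrite XiS_set_last ?gamS_set_last.
by ring.
Qed.

Variables (ev : pred Om) (i : 'I_B).
Hypotheses (ev_set_last : forall w x, ev (set_last w x) = ev w)
           (ev_XiS : forall w, ev w -> XiS w k = i).

Lemma sum_weight_last (h : 'I_B -> G -> R) x0 :
  \sum_(w | ev w) weight pi0 pt q w * h (XiS w k.+1) (gamS w k)
  = (\sum_(v | last_step v == x0) (if ev v then prefix_weight v else 0))
    * \sum_j pt i j * \sum_g gprob q j g * h j g.
Proof.
rewrite big_mkcond (sum_reindex_key _ _ x0 _ last_step_set set_last_set set_last_step).
rewrite mulr_suml; apply: eq_bigr => v _; under eq_bigr do rewrite ev_set_last.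
case: (boolP (ev v)) => hv; last by rewrite big1 ?mul0r.
rewrite (eq_bigr (fun x => prefix_weight v * (pt i x.1 * (gprob q x.1 x.2 * h x.1 x.2)))).
  rewrite -mulr_sumr -(pair_bigA _ (fun j g => pt i j * (gprob q j g * h j g))) /=.
  by congr (_ * _); apply: eq_bigr => j _; rewrite mulr_sumr.
move=> x _; rewrite weight_set_last XiS_set_last_end gamS_set_last_end (ev_XiS _ hv).
by rewrite !mulrA.
Qed.

Hypothesis pt_sum1 : \sum_j pt i j = 1.

(* Given the past, gamma(k) is drawn by first moving the chain from Xi(k-1) = i. *)
Lemma sum_weight_last_link (f : G -> R) :
  \sum_(w | ev w) weight pi0 pt q w * f (gamS w k)
  = (\sum_(w | ev w) weight pi0 pt q w) * \sum_j pt i j * \sum_g gprob q j g * f g.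
Proof.
pose x0 := (i, [ffun=> false] : G).
have norm1 : \sum_j pt i j * \sum_g gprob q j g * (1 : R) = 1.
  rewrite -[RHS]pt_sum1; apply: eq_bigr => j _.
  by rewrite (eq_bigr _ (fun g _ => mulr1 _)) gprob_sum1 // mulr1.
have := sum_weight_last (fun _ _ => 1) x0.
rewrite norm1 mulr1 (eq_bigr _ (fun w _ => mulr1 (weight pi0 pt q w))) => ->.
exact: (sum_weight_last (fun _ g => f g)).
Qed.

End LastStep.

Lemma nuE {R : realType} {M B n} p par (C : forall m : 'I_M, 'M[R]_(p m, n))
    (q : 'I_M -> 'I_B -> R) pt i :
  nu p par C q pt i
  = \sum_j pt i j * \sum_g gprob q j g * (~~ rfull (Cstack p par C g))%:R.
Proof.
apply: eq_bigr => j _; rewrite /prob_r0 big_mkcond; congr (_ * _).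
by apply: eq_bigr => g _; case: ifP; rewrite ?mulr1 ?mulr0.
Qed.

Theorem lemma2 (R : realType) (n M B : nat)
  (A Q : nat -> 'M[R]_n) (P0 : 'M[R]_n)
  (p : 'I_M -> nat) (C : forall m : 'I_M, 'M[R]_(p m, n))
  (Rm : forall m : 'I_M, nat -> 'M[R]_(p m))
  (par : 'I_M -> option 'I_M)
  (pt : 'I_B -> 'I_B -> R) (pi0 : 'I_B -> R) (q : 'I_M -> 'I_B -> R) :
  rooted_tree par ->
  (forall i j, 0 <= pt i j) -> (forall i, \sum_j pt i j = 1) ->
  (forall i, 0 <= pi0 i) -> \sum_i pi0 i = 1 ->
  (forall m j, 0 <= q m j <= 1) ->
  psd P0 -> (forall k, psd (Q k)) -> (forall m k, pd (Rm m k)) ->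
  (exists c : R, forall k, specnorm (A k) <= c /\ specnorm (Q k) <= c /\
                   forall m, specnorm (Rm m k) <= c) ->
  (forall (gs : nat -> {ffun 'I_M -> bool}) (k : nat),
      0 <= \tr (Ppred p par A Q C Rm P0 gs k)) /\
  exists W : R, 0 <= W /\
    forall (k : nat) (P : 'M[R]_n) (i : 'I_B),
      let ev (w : Omega M B k) :=
        (Ppred p par A Q C Rm P0 (gamS w) k == P) && (XiS w k == i) in
      let prZ := \sum_(w : Omega M B k | ev w) weight pi0 pt q w in
      0 < prZ ->
      (\sum_(w : Omega M B k | ev w)
          weight pi0 pt q w * \tr (Ppred p par A Q C Rm P0 (gamS w) k.+1)) / prZ
      <= W + nu p par C q pt i * (specnorm (A k) ^+ 2 * \tr P + \tr (Q k)).
Proof.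
move=> _ pt_ge0 pt_sum1 pi0_ge0 _ q01 psdP0 psdQ pdRm [c hc].
split=> [gs k|]; first exact/psd_trace_ge0/psd_Ppred.
exists (riccati_offset p par C c); split=> [|k P i ev prZ prZ_gt0].
  exact: riccati_offset_ge0.
set W := riccati_offset p par C c; set X := specnorm (A k) ^+ 2 * \tr P + \tr (Q k).
pose r g := (~~ rfull (Cstack p par C g))%:R : R.
have ev_set_last w x : ev (set_last M B k w x) = ev w.
  rewrite /ev XiS_set_last // (eq_Ppred _ _ _ _ _ _ _ _ (gamS w)) // => t.
  exact: gamS_set_last.
have ev_XiS w : ev w -> XiS w k = i by case/andP=> _ /eqP.
rewrite ler_pdivrMr //; apply: le_trans (_ : _ <=
  \sum_(w | ev w) (weight pi0 pt q w * W + X * (weight pi0 pt q w * r (gamS w k)))) _.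
  apply: ler_sum => w /andP[/eqP Pk _]; have [hA [hQ hR]] := hc k.
  have := mxtrace_Ppred_succ_le p par A Q C Rm P0 psdP0 psdQ pdRm c (gamS w) k hA hQ hR.
  by rewrite Pk -/X -/W -/(r _); have := weight_ge0 _ q01 _ _ w pt_ge0 pi0_ge0; nra.
rewrite big_split /= -mulr_suml -mulr_sumr.
rewrite (sum_weight_last_link _ _ _ _ _ _ _ _ ev_set_last ev_XiS (pt_sum1 i) r).
by rewrite -/prZ nuE; lra.
Qed.
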